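(* Let $M$ be a finite abelian group of exponent greater than $2$. Then $\mathrm{Half}(L_M)\cong C_2\times\mathrm{Aut}(L_M)$.
   Context: Let $K=\{1,a,b,c\}$ be the Klein four-group. Set $L_M=K\times M$ with the operation $(A,x)*(B,y)=(AB,xy)$ if $B=1$, and $(A,x)*(B,y)=(AB,x^{-1}y)$ if $B\neq 1$. $\mathrm{Half}(L_M)$ denotes the group (under composition) of half-automorphisms of $L_M$, i.e. bijections $f$ with $f(XY)\in\{f(X)f(Y),f(Y)f(X)\}$ for all $X,Y$; $\mathrm{Aut}(L_M)$ is the automorphism group; $C_2$ is the cyclic group of order $2$. *)

From HB Require Import structures.
From mathcomp Require Import all_boot all_fingroup all_solvable all_algebra.
Set Implicit Arguments. Unset Strict Implicit. Unset Printing Implicit Defensive.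
Local Open Scope group_scope.

Definition Klein := (bool * bool)%type.
Definition K1 : Klein := (false, false).
Definition Kmul (A B : Klein) : Klein := (A.1 (+) B.1, A.2 (+) B.2).

Definition LM (M : finGroupType) := (Klein * M)%type.

Definition Lmul (M : finGroupType) (X Y : LM M) : LM M :=
  (Kmul X.1 Y.1, if Y.1 == K1 then X.2 * Y.2 else (X.2)^-1 * Y.2).

Definition Half (M : finGroupType) : {set {perm LM M}} :=
  [set f : {perm LM M} | [forall X : LM M, forall Y : LM M,
     (f (Lmul X Y) == Lmul (f X) (f Y)) || (f (Lmul X Y) == Lmul (f Y) (f X))]].

Definition Aut_L (M : finGroupType) : {set {perm LM M}} :=
  [set f : {perm LM M} | [forall X : LM M, forall Y : LM M,
     f (Lmul X Y) == Lmul (f X) (f Y)]].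

From mathcomp Require Import all_boot all_fingroup all_solvable all_algebra.
Set Implicit Arguments. Unset Strict Implicit. Unset Printing Implicit Defensive.
Local Open Scope group_scope.

(* A half-automorphism f of L_M fixes the identity and, since M has an element
   of order > 2, maps N = {(1,x)} onto itself, inducing an automorphism phi of M.
   On each coset {(A,x)} with A <> 1 its M-coordinate is x |-> c_A * phi(x)^(+-1),
   and the sign is the same on all three nontrivial cosets.  With sign + f is an
   automorphism; with sign - so is J o f, where J inverts the M-coordinate off N.
   The map J is a half-automorphism but not an automorphism, is an involution,
   and commutes with every automorphism, so Half(L_M) = Aut(L_M) x <J>. *)

Lemma Kmul1 A : Kmul A K1 = A. Proof. by case: A => [] [] []. Qed.
Lemma K1mul A : Kmul K1 A = A. Proof. by case: A => [] [] []. Qed.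
Lemma Kmulxx A : Kmul A A = K1. Proof. by case: A => [] [] []. Qed.
Lemma KmulC A B : Kmul A B = Kmul B A. Proof. by case: A B => [] [] [] [] [] []. Qed.
Lemma KmulK A B : Kmul A (Kmul A B) = B.
Proof. by case: A B => [] [] [] [] [] []. Qed.
Lemma Kmul_eq1 A B : (Kmul A B == K1) = (A == B).
Proof. by case: A B => [] [] [] [] [] []. Qed.

Lemma eq_invg_expg2 (T : finGroupType) (x : T) : (x^-1 == x) = (x ^+ 2 == 1).
Proof. by rewrite eq_invg_mul. Qed.

Lemma exists_expg2_neq1 (T : finGroupType) (G : {group T}) :
  2 < exponent G -> exists2 y, y \in G & y ^+ 2 != 1.
Proof.
move=> expG; apply/exists_inP; apply: contraLR expG; rewrite negb_exists_in -leqNgt.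
by move=> /forall_inP sq1; apply/dvdn_leq/exponentP => // y /sq1/negPn/eqP.
Qed.

Section HalfAutomorphisms.
Variable M : finGroupType.
Implicit Types (A B : Klein) (x y z c k : M) (X Y : LM M).

Lemma Lmul_K1r A x y : Lmul (A, x) (K1, y) = (A, x * y).
Proof. by rewrite /Lmul /= Kmul1. Qed.

Lemma Lmul_K1l B x y :
  Lmul (K1, x) (B, y) = (B, if B == K1 then x * y else x^-1 * y).
Proof. by rewrite /Lmul /= K1mul. Qed.

Lemma Lmul_nK1r A B x y : B != K1 -> Lmul (A, x) (B, y) = (Kmul A B, x^-1 * y).
Proof. by move=> /negbTE nB; rewrite /Lmul /= nB. Qed.

Definition half_morph (f : LM M -> LM M) :=
  forall X Y, f (Lmul X Y) = Lmul (f X) (f Y) \/ f (Lmul X Y) = Lmul (f Y) (f X).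

Lemma half_morph_comp (f g : LM M -> LM M) :
  half_morph f -> half_morph g -> half_morph (g \o f).
Proof.
move=> fH gH X Y /=; case: (fH X Y) => ->.
  by case: (gH (f X) (f Y)) => ->; [left | right].
by case: (gH (f Y) (f X)) => ->; [right | left].
Qed.

Lemma HalfP (f : {perm LM M}) : reflect (half_morph f) (f \in Half M).
Proof.
rewrite inE; apply: (iffP forallP) => [fH X Y | fH X].
  by move: (fH X) => /forallP/(_ Y)/orP[]/eqP; [left | right].
by apply/forallP => Y; case: (fH X Y) => ->; rewrite eqxx ?orbT.
Qed.

Lemma Aut_LP (f : {perm LM M}) :
  reflect {morph f : X Y / Lmul X Y} (f \in Aut_L M).
Proof.
rewrite inE; apply: (iffP forallP) => [fM X Y | fM X].
  by move: (fM X) => /forallP/(_ Y)/eqP.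
by apply/forallP => Y; rewrite fM.
Qed.

Lemma group_set_Half : group_set (Half M).
Proof.
apply/group_setP; split=> [|f g /HalfP fH /HalfP gH]; apply/HalfP.
  by move=> X Y; left; rewrite !perm1.
by move=> X Y; rewrite !permM; apply: (half_morph_comp fH gH).
Qed.
Canonical Half_group := group group_set_Half.

Lemma group_set_Aut_L : group_set (Aut_L M).
Proof.
apply/group_setP; split=> [|f g /Aut_LP fM /Aut_LP gM]; apply/Aut_LP.
  by move=> X Y; rewrite !perm1.
by move=> X Y; rewrite !permM fM gM.
Qed.
Canonical Aut_L_group := group group_set_Aut_L.

Lemma Aut_L_sub_Half : Aut_L M \subset Half M.
Proof. by apply/subsetP => f /Aut_LP fM; apply/HalfP => X Y; left. Qed.

Hypothesis mulgC : forall x y : M, x * y = y * x.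

Lemma invMgC x y : (x * y)^-1 = x^-1 * y^-1.
Proof. by rewrite invMg mulgC. Qed.

Lemma mulgACA x y z c : x * y * (z * c) = x * z * (y * c).
Proof. by rewrite -!mulgA; congr (x * _); rewrite !mulgA (mulgC y). Qed.

Lemma morphg1 (ph : M -> M) : {morph ph : x y / x * y} -> ph 1 = 1.
Proof. by move=> phM; apply: (mulgI (ph 1)); rewrite -phM !mulg1. Qed.

Lemma morphgV (ph : M -> M) : {morph ph : x y / x * y} -> {morph ph : x / x^-1}.
Proof. by move=> phM x; apply: (mulgI (ph x)); rewrite -phM !mulgV morphg1. Qed.

Lemma twisted_morph_dichotomy (ph u : M -> M) : {morph ph : x y / x * y} ->
  (forall x y, u (x * y) = u x * ph y \/ u (x * y) = u x * (ph y)^-1) ->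
  (forall x, u x = u 1 * ph x) \/ (forall x, u x = u 1 * (ph x)^-1).
Proof.
(* If u x = c * (ph x)^-1 with (ph x)^2 <> 1, evaluating at x * (x^-1 * y)
   leaves u y = c * (ph y)^-1 as the only option. *)
move=> phM twist; set c := u 1.
have base y : u y = c * ph y \/ u y = c * (ph y)^-1 by have := twist 1 y; rewrite mul1g.
have [plus | /forallPn[x ux_plus]] := boolP [forall x, u x == c * ph x].
  by left => x; apply/eqP/(forallP plus).
have ux : u x = c * (ph x)^-1 by case: (base x) => // ux; rewrite ux eqxx in ux_plus.
have nX : (ph x)^-1 != ph x by apply: contraNneq ux_plus => X_inv; rewrite ux X_inv.
right => y; case: (base y) => // uy.
have := twist x (x^-1 * y); rewrite mulKVg phM (morphgV phM) ux uy.
case=> [|->]; last by rewrite invMgC invgK mulgA mulgKV.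
rewrite mulgA => /mulIg; rewrite -{1}[c]mulg1 -mulgA => /mulgI/esym.
by move=> /(canRL (mulKVg _)); rewrite mulg1 => /eqP; rewrite (negbTE nX).
Qed.

Lemma coef_mixed_contra k c Z : Z ^+ 2 != 1 ->
  c = k \/ c = k^-1 ->
  c * Z = k * Z^-1 \/ c * Z = k^-1 * Z ->
  c * Z^-1 = k * Z^-1 \/ c * Z^-1 = k^-1 * Z ->
  c = k * (Z * Z)^-1 \/ c = k^-1 * (Z * Z) -> False.
Proof.
move=> Z2 h1 h2 h3 h4.
have dk : k * (Z * Z)^-1 != k by rewrite -{2}[k]mulg1 (inj_eq (mulgI k)) invg_eq1.
have dk' : k^-1 * (Z * Z) != k^-1 by rewrite -{2}[k^-1]mulg1 (inj_eq (mulgI _)).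
have {}h2 : c = k * (Z * Z)^-1 \/ c = k^-1.
  by case: h2 => [/(canRL (mulgK Z)) | /mulIg]; [left; rewrite invMgC mulgA | right].
have {}h3 : c = k \/ c = k^-1 * (Z * Z).
  by case: h3 => [/mulIg | /(canRL (mulgKV Z))]; [left | right; rewrite mulgA].
case: h2 => e2; case: h3 => e3.
- by move: dk; rewrite -e2 e3 eqxx.
- by case: h1 => e1; [move: dk; rewrite -e2 | move: dk'; rewrite -e3]; rewrite e1 eqxx.
- by case: h4 => e4; [move: dk; rewrite -e4 e3 | move: dk'; rewrite -e4 e2]; rewrite eqxx.
- by move: dk'; rewrite -e3 e2 eqxx.
Qed.

Lemma coef_plus_eq k c Z : Z ^+ 2 != 1 ->
  c = k \/ c = k^-1 -> c * Z = k * Z \/ c * Z = k^-1 * Z^-1 -> c = k.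
Proof.
move=> Z2 [// | ck] [/mulIg // |]; rewrite -ck => /mulgI/eqP.
by rewrite eq_sym eq_invg_expg2 (negbTE Z2).
Qed.

Definition Jinv X : LM M := if X.1 == K1 then X else (X.1, X.2^-1).

Lemma Jinv_K1 x : Jinv (K1, x) = (K1, x).
Proof. by []. Qed.

Lemma Jinv_nK1 A x : A != K1 -> Jinv (A, x) = (A, x^-1).
Proof. by rewrite /Jinv => /negbTE->. Qed.

Lemma JinvK : involutive Jinv.
Proof.
move=> [A x]; have [-> | nA] := eqVneq A K1; first by rewrite !Jinv_K1.
by rewrite !Jinv_nK1 // invgK.
Qed.

Variable y0 : M.
Hypothesis y0_sq : y0 ^+ 2 != 1.

Section HalfMorphism.
Variable f : LM M -> LM M.
Hypotheses (fH : half_morph f) (f_inj : injective f).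

Lemma half_morph_id : f (K1, 1) = (K1, 1).
Proof.
have : f (K1, 1) = Lmul (f (K1, 1)) (f (K1, 1)).
  by have := fH (K1, 1) (K1, 1); rewrite Lmul_K1r mulg1; case.
case: (f (K1, 1)) => P u; rewrite /Lmul /= Kmulxx => -[-> /= /esym].
by move=> /(canRL (mulKg u)); rewrite mulVg => ->.
Qed.

Lemma half_fst_K1_sq x : x ^+ 2 != 1 -> (f (K1, x)).1 = K1.
Proof.
move=> x2; apply/eqP/negPn/negP => nP.
have : f (K1, x ^+ 2) = Lmul (f (K1, x)) (f (K1, x)).
  by have := fH (K1, x) (K1, x); rewrite Lmul_K1r; case.
case: (f (K1, x)) nP => P u /= nP.
by rewrite Lmul_nK1r // Kmulxx mulVg -half_morph_id => /f_inj[/eqP]; apply/negP.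
Qed.

Lemma half_fst_K1 x : (f (K1, x)).1 = K1.
Proof.
(* If x ^+ 2 = 1, then x = (x * y0) * y0^-1 with both factors of order > 2. *)
have [x2 | ] := eqVneq (x ^+ 2) 1; last exact: half_fst_K1_sq.
have xy0_sq : (x * y0) ^+ 2 != 1 by rewrite expgMn ?x2 ?mul1g //; exact: mulgC.
have y0V_sq : y0^-1 ^+ 2 != 1 by rewrite expgVn invg_eq1.
have := fH (K1, x * y0) (K1, y0^-1); rewrite Lmul_K1r mulgK.
by case=> ->; rewrite /Lmul /= !half_fst_K1_sq.
Qed.

Definition phi x := (f (K1, x)).2.

Lemma half_K1 x : f (K1, x) = (K1, phi x).
Proof. by move: (half_fst_K1 x); rewrite /phi; case: (f (K1, x)) => P u /= ->. Qed.

Lemma phiM : {morph phi : x y / x * y}.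
Proof.
move=> x y; have := fH (K1, x) (K1, y).
by rewrite Lmul_K1r !half_K1 !Lmul_K1r => -[] [->] //; rewrite mulgC.
Qed.

Lemma phi_bij : bijective phi.
Proof.
apply: injF_bij => x y phi_xy.
by have /f_inj[] : f (K1, x) = f (K1, y) by rewrite !half_K1 phi_xy.
Qed.

Lemma half_fst_nK1 A x : A != K1 -> (f (A, x)).1 != K1.
Proof.
move=> nA; apply: contra nA => /eqP fst1; have [phiV _ phiVK] := phi_bij.
have /f_inj[-> //] : f (K1, phiV (f (A, x)).2) = f (A, x).
by rewrite half_K1 phiVK -fst1; case: (f (A, x)).
Qed.

Lemma half_fst A x : (f (A, x)).1 = (f (A, 1)).1.
Proof.
have := fH (A, 1) (K1, x); rewrite Lmul_K1r mul1g half_K1.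
by case: (f (A, 1)) => P u [] ->; rewrite ?Lmul_K1r ?Lmul_K1l.
Qed.

Lemma half_fst_mul A B :
  B != K1 -> (f (Kmul A B, 1)).1 = Kmul (f (A, 1)).1 (f (B, 1)).1.
Proof.
move=> nB; have := fH (A, 1) (B, 1); rewrite Lmul_nK1r // invg1 mulg1.
by case=> ->; rewrite /Lmul //= KmulC.
Qed.

Lemma half_snd_K1r A x y : A != K1 ->
  (f (A, x * y)).2 = (f (A, x)).2 * phi y \/
  (f (A, x * y)).2 = (f (A, x)).2 * (phi y)^-1.
Proof.
move=> nA; have := fH (A, x) (K1, y); have := half_fst_nK1 x nA.
rewrite Lmul_K1r half_K1; case: (f (A, x)) => P u /= nP.
by case=> ->; [left; rewrite Lmul_K1r | right; rewrite Lmul_K1l (negbTE nP) mulgC].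
Qed.

Lemma half_snd_nK1 A B x y : A != K1 -> B != K1 ->
  (f (Kmul A B, x^-1 * y)).2 = ((f (A, x)).2)^-1 * (f (B, y)).2 \/
  (f (Kmul A B, x^-1 * y)).2 = ((f (B, y)).2)^-1 * (f (A, x)).2.
Proof.
move=> nA nB; have := fH (A, x) (B, y); rewrite Lmul_nK1r //.
have := half_fst_nK1 x nA; have := half_fst_nK1 y nB.
case: (f (A, x)) => P u; case: (f (B, y)) => Q v /= nQ nP.
by rewrite !Lmul_nK1r //; case=> ->; [left | right].
Qed.

Definition plus_at A := forall x, (f (A, x)).2 = (f (A, 1)).2 * phi x.
Definition minus_at A := forall x, (f (A, x)).2 = (f (A, 1)).2 * (phi x)^-1.

Lemma plus_at_K1 : plus_at K1.
Proof. by move=> x; rewrite half_morph_id mul1g. Qed.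

Lemma sign_dichotomy A : A != K1 -> plus_at A \/ minus_at A.
Proof.
move=> nA; apply: (twisted_morph_dichotomy phiM) => x y.
exact: half_snd_K1r.
Qed.

Lemma phi_expg2_neq1 : exists z, phi z ^+ 2 != 1.
Proof. by have [phiV _ phiVK] := phi_bij; exists (phiV y0); rewrite phiVK. Qed.

Lemma mixed_signs_contra A B :
  A != K1 -> B != K1 -> A != B -> plus_at A -> minus_at B -> False.
Proof.
move=> nA nB nAB plusA minusB; have nAB1 : Kmul A B != K1 by rewrite Kmul_eq1.
have [z Z2] := phi_expg2_neq1; set Z := phi z in Z2.
set k := ((f (A, 1)).2)^-1 * (f (B, 1)).2; set c := (f (Kmul A B, 1)).2.
have E x y : (f (Kmul A B, x^-1 * y)).2 = k * (phi x * phi y)^-1 \/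
             (f (Kmul A B, x^-1 * y)).2 = k^-1 * (phi x * phi y).
  case: (half_snd_nK1 x y nA nB) => ->; rewrite plusA minusB; [left | right].
    by rewrite invMgC mulgACA invMgC.
  by rewrite /k !invMgC !invgK mulgACA (mulgC (phi y)) (mulgC _^-1).
have phi1 := morphg1 phiM.
have h1 : c = k \/ c = k^-1 by have := E 1 1; rewrite invg1 mul1g phi1 mulg1 invg1 !mulg1.
have h4 : c = k * (Z * Z)^-1 \/ c = k^-1 * (Z * Z) by have := E z z; rewrite mulVg.
have S1 := E 1 z; have S2 := E z 1; rewrite invg1 mul1g phi1 mul1g in S1.
rewrite mulg1 phi1 mulg1 in S2.
(* Whatever the sign of the coset of [Kmul A B], both c * Z and c * Z^-1 lie in
   {k * Z^-1, k^-1 * Z}. *)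
have [signC | signC] := sign_dichotomy nAB1; move: S1 S2;
  rewrite (signC z) (signC z^-1) (morphgV phiM) ?invgK -/Z -/c => S1 S2.
- exact: (coef_mixed_contra Z2 h1 S1 S2 h4).
- exact: (coef_mixed_contra Z2 h1 S2 S1 h4).
Qed.

Lemma plus_everywhere A0 : A0 != K1 -> plus_at A0 -> forall A, plus_at A.
Proof.
move=> nA0 plus0 A; have [-> | nA] := eqVneq A K1; first exact: plus_at_K1.
have [-> // | nAA0] := eqVneq A A0.
have [// | minusA] := sign_dichotomy nA.
by case: (mixed_signs_contra nA0 nA _ plus0 minusA); rewrite eq_sym.
Qed.

Section Untwisted.
Hypothesis plus : forall A, plus_at A.

Lemma untwisted_form A x : f (A, x) = ((f (A, 1)).1, (f (A, 1)).2 * phi x).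
Proof. by rewrite -plus -(half_fst A x); case: (f (A, x)). Qed.

Lemma untwisted_coef_mul A B : B != K1 ->
  (f (Kmul A B, 1)).2 = ((f (A, 1)).2)^-1 * (f (B, 1)).2.
Proof.
move=> nB; have [-> | nA] := eqVneq A K1.
  by rewrite K1mul half_morph_id invg1 mul1g.
have [<- | nAB] := eqVneq A B; first by rewrite Kmulxx half_morph_id mulVg.
have [z Z2] := phi_expg2_neq1.
apply: (coef_plus_eq Z2); rewrite invMg invgK.
  by have := half_snd_nK1 1 1 nA nB; rewrite invg1 mul1g.
have := half_snd_nK1 1 z nA nB; rewrite invg1 mul1g (plus (Kmul A B) z) (plus B z).
case=> ->; [by left; rewrite mulgA | right].
by rewrite invMgC -mulgA (mulgC (phi z)^-1) mulgA.
Qed.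

Lemma untwisted_morph : {morph f : X Y / Lmul X Y}.
Proof.
move=> [A x] [B y]; have [-> | nB] := eqVneq B K1.
  by rewrite !Lmul_K1r (untwisted_form A (x * y)) (untwisted_form A x) half_K1
             Lmul_K1r phiM mulgA.
rewrite Lmul_nK1r // (untwisted_form (Kmul A B)) (untwisted_form A x).
rewrite (untwisted_form B y) (Lmul_nK1r _ _ _ (half_fst_nK1 1 nB)).
rewrite half_fst_mul // untwisted_coef_mul // phiM (morphgV phiM).
by rewrite invMgC mulgACA.
Qed.

End Untwisted.

Section Automorphism.
Hypothesis fM : {morph f : X Y / Lmul X Y}.

Lemma morph_coef_mul A B : B != K1 ->
  (f (Kmul A B, 1)).2 = ((f (A, 1)).2)^-1 * (f (B, 1)).2.
Proof.
move=> nB; have := fM (A, 1) (B, 1); rewrite Lmul_nK1r // invg1 mulg1 => ->.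
by rewrite /Lmul /= (negbTE (half_fst_nK1 1 nB)).
Qed.

Lemma morph_coefV A : A != K1 -> ((f (A, 1)).2)^-1 = (f (A, 1)).2.
Proof.
(* For B <> 1, A: c_B = c_A^-1 * c_(AB) = c_A^-1 * c_A^-1 * c_B. *)
move=> nA; set B := if A == (true, true) then (true, false) else (true, true).
have nB : B != K1 by rewrite /B; case: (A == _).
have nAB : Kmul A B != K1 by rewrite Kmul_eq1 /B; case: (A) nA => [] [] [].
have := morph_coef_mul A nAB; rewrite KmulK (morph_coef_mul A nB) mulgA.
rewrite -{1}[(f (B, 1)).2]mul1g => /mulIg/esym/(canRL (mulKVg _)).
by rewrite mulg1.
Qed.

Lemma morph_Jinv X : f (Jinv X) = Jinv (f X).
Proof.
case: X => A x; have [-> | nA] := eqVneq A K1; first by rewrite Jinv_K1 half_K1 Jinv_K1.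
have form t : f (A, t) = ((f (A, 1)).1, (f (A, 1)).2 * phi t).
  have := fM (A, 1) (K1, t); rewrite Lmul_K1r mul1g half_K1 => ->.
  by case: (f (A, 1)) => P u; rewrite Lmul_K1r.
have := half_fst_nK1 x nA; rewrite Jinv_nK1 // (form x^-1) (form x) /= => nP.
by rewrite Jinv_nK1 // (morphgV phiM) invMgC morph_coefV.
Qed.

End Automorphism.
End HalfMorphism.

Lemma Jinv_half : half_morph Jinv.
Proof.
case=> A x [B y]; have [-> | nB] := eqVneq B K1.
  rewrite Lmul_K1r Jinv_K1; have [-> | nA] := eqVneq A K1.
    by left; rewrite !Jinv_K1 Lmul_K1r.
  by right; rewrite !Jinv_nK1 // Lmul_K1l (negbTE nA) invMg.
rewrite Lmul_nK1r // (Jinv_nK1 y) //; have [-> | nA] := eqVneq A K1.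
  by right; rewrite K1mul Jinv_K1 Jinv_nK1 // Lmul_K1r invMg invgK.
have [<- | nAB] := eqVneq A B.
  by right; rewrite Kmulxx Jinv_K1 Jinv_nK1 // Lmul_nK1r // Kmulxx !invgK mulgC.
have nAB1 : Kmul A B != K1 by rewrite Kmul_eq1.
by left; rewrite !Jinv_nK1 // Lmul_nK1r // invMg !invgK mulgC.
Qed.

Lemma Jinv_not_morph : ~ {morph Jinv : X Y / Lmul X Y}.
Proof.
move=> JM; have := JM ((true, true), 1) (K1, y0).
rewrite Lmul_K1r mul1g Jinv_K1 !Jinv_nK1 // invg1 Lmul_K1r mul1g => -[/eqP].
by rewrite eq_invg_expg2 (negbTE y0_sq).
Qed.

Lemma half_morph_dichotomy (f : LM M -> LM M) : half_morph f -> injective f ->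
  {morph f : X Y / Lmul X Y} \/ {morph Jinv \o f : X Y / Lmul X Y}.
Proof.
move=> fH f_inj; set A0 : Klein := (true, true).
have [plus | minus] := sign_dichotomy fH f_inj (isT : A0 != K1).
  by left; apply: untwisted_morph => //; exact: plus_everywhere plus.
right; set g := Jinv \o f.
have gH : half_morph g := half_morph_comp fH Jinv_half.
have g_inj : injective g := inj_comp (can_inj JinvK) f_inj.
apply: untwisted_morph => //; apply: (plus_everywhere gH g_inj (isT : A0 != K1)) => x.
have Jf t : (g (A0, t)).2 = ((f (A0, t)).2)^-1.
  have := half_fst_nK1 fH f_inj t (isT : A0 != K1).
  by rewrite /g /=; case: (f (A0, t)) => P u /= nP; rewrite Jinv_nK1.
have phi_g : phi g x = phi f x by rewrite /phi /g /= (half_K1 fH f_inj).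
by rewrite !Jf phi_g (minus x) invMgC invgK.
Qed.

Definition Jperm : {perm LM M} := perm (can_inj JinvK).

Lemma JpermE X : Jperm X = Jinv X.
Proof. by rewrite permE. Qed.

Lemma Jperm_Half : Jperm \in Half M.
Proof. by apply/HalfP => X Y; rewrite !JpermE; exact: Jinv_half. Qed.

Lemma Jperm_notin_Aut_L : Jperm \notin Aut_L M.
Proof.
by apply/negP => /Aut_LP JM; apply: Jinv_not_morph => X Y; rewrite -!JpermE JM.
Qed.

Lemma order_Jperm : #[Jperm] = 2.
Proof.
have nt : #[Jperm] != 1%N.
  by rewrite order_eq1; apply: contraNneq Jperm_notin_Aut_L => ->; exact: group1.
apply/(@prime_nt_dvdP _ 2 isT nt); rewrite order_dvdn.
by apply/eqP/permP => X; rewrite expg2 permM !JpermE JinvK perm1.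
Qed.

Lemma Half_dprod : Aut_L M \x <[Jperm]> = Half M.
Proof.
rewrite dprodE.
- apply/eqP; rewrite eqEsubset mul_subG ?Aut_L_sub_Half ?cycle_subG ?Jperm_Half //=.
  apply/subsetP => f /HalfP fH.
  have [fM | JfM] := half_morph_dichotomy fH perm_inj.
    by rewrite -[f]mulg1 mem_mulg ?group1 //; apply/Aut_LP.
  rewrite -[f](mulgK Jperm) mem_mulg ?groupV ?cycle_id //.
  by apply/Aut_LP => X Y; rewrite !permM !JpermE; exact: JfM.
- rewrite cycle_subG; apply/centP => g /Aut_LP gM; apply/permP => X.
  have gH : half_morph g by move=> Y Z; left; apply: gM.
  by rewrite !permM !JpermE (morph_Jinv gH perm_inj gM).
- apply/trivgP/subsetP => g /setIP[gA]; rewrite [gval _]/= cycle2g ?order_Jperm // !inE.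
  by case/orP=> [/eqP-> // | /eqP gJ]; rewrite gJ (negbTE Jperm_notin_Aut_L) in gA.
Qed.

End HalfAutomorphisms.

Theorem corollary5p4 (M : finGroupType) :
  abelian [set: M] -> 2 < exponent [set: M] ->
  Half M \isog setX (Zp 2) (Aut_L M).
Proof.
move=> abM /exists_expg2_neq1[y0 _ y0_sq].
have mulgC (x y : M) : x * y = y * x by apply: (centsP abM); rewrite inE.
have := Half_dprod mulgC y0_sq; rewrite dprodC => defHalf.
apply: (isog_dprod defHalf (setX_dprod _ [group of Aut_L M])); last exact: isog_set1X.
apply: isog_trans (isog_setX1 _ _).
rewrite isog_cyclic_card ?cycle_cyclic //= ?prime_cyclic card_Zp //.
by rewrite -orderE (order_Jperm y0_sq).
Qed.
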